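(* Fix $\kappa>0$ and $h\in(0,1)$. Let $G$ be a probability measure on $[h,1)$ and let $X_1,\dots,X_n\overset{iid}{\sim}f_G$, where $$f_G(x)=\int\frac{\Gamma(x+\kappa)}{x!\,\Gamma(\kappa)}p^\kappa(1-p)^x\,dG(p),\qquad x=0,1,\dots.$$ Let $t=-\log(1-h)/2>0$ and $A_h=\left(\frac{h}{1-\sqrt{1-h}}\right)^\kappa\in(0,\infty)$. For any $a>1$ let $K=\left\lceil\frac{a\log n+\log A_h}{t}\right\rceil$. Then for every integer $s\ge0$, $$\mathbb P_G(X_1\ge K+s)\le\frac{e^{-ts}}{n^a}.$$ *)

From HB Require Import structures.
From mathcomp Require Import all_boot all_order all_algebra.
From mathcomp Require Import all_classical all_reals all_analysis.
Set Implicit Arguments. Unset Strict Implicit. Unset Printing Implicit Defensive.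
Import Order.TTheory GRing.Theory Num.Theory.
Import numFieldNormedType.Exports.
Local Open Scope classical_set_scope.
Local Open Scope ring_scope.

Definition Gamma {R : realType} (z : R) : R :=
  Rintegral (@lebesgue_measure R) `]0%R, +oo[
    (fun x : R => x `^ (z - 1) * expR (- x)).

Definition negbin_pmf {R : realType} (kappa p : R) (x : nat) : R :=
  Gamma (x%:R + kappa) / (x`!%:R * Gamma kappa) * p `^ kappa * (1 - p) ^+ x.

Definition fG {R : realType} (G : probability R R) (kappa : R) (x : nat) : \bar R :=
  (\int[G]_p (negbin_pmf kappa p x)%:E)%E.

Definition tailG {R : realType} (G : probability R R) (kappa : R) (m : int) : \bar R :=
  (\sum_(x <oo | (m <= x%:Z)%R) fG G kappa x)%E.

(* Chernoff's bound with the tilt e^t = 1/q, q = sqrt(1 - h), gives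
   P_p(X >= m) <= q^m E_p[e^(tX)] for X ~ NB(kappa, p).  Writing Gamma(x + kappa) as
   an integral and summing under it (Tonelli) gives
   sum_x Gamma(x + kappa) r^x / x! = (1 - r)^(-kappa) Gamma(kappa), so the moment
   generating function is (p / (1 - (1 - p) e^t))^kappa, which for p >= h = 1 - q^2 is
   at most (1 + q)^kappa = A_h.  Integrating against G, which lives on [h, 1), bounds
   the tail by q^m A_h, and the choice of K makes q^K A_h <= n^(-a). *)

From HB Require Import structures.
From mathcomp Require Import all_boot all_order all_algebra.
From mathcomp Require Import all_classical all_reals all_analysis.
From mathcomp Require Import measurable_realfun ring lra.
Import Order.TTheory GRing.Theory Num.Theory.
Import numFieldNormedType.Exports.
Local Open Scope classical_set_scope.
Local Open Scope ring_scope.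

Section dilation.
Context {R : realType} (c : R).
Hypothesis c0 : 0 < c.
Local Notation mu := (@lebesgue_measure R).

(* The ascription makes the pushforward of [mu] along [dil] a measure on the Lebesgue
   sigma-algebra, as [lebesgue_measure_unique] requires. *)
Let dil := ( *%R c) : measurableTypeR R -> measurableTypeR R.
Let mdil : measurable_fun [set: measurableTypeR R] dil.
Proof. exact: mulrl_measurable. Qed.

Lemma mulr_preimage_itvoc (a b : R) :
  ( *%R c) @^-1` `]a, b] = `]a / c, b / c]%classic.
Proof.
apply/seteqP; split => x /=; rewrite !in_itv/= => /andP[ax xb]; apply/andP; split.
- by rewrite ltr_pdivrMr// mulrC.
- by rewrite ler_pdivlMr// mulrC.
- by rewrite -ltr_pdivrMl// mulrC.
- by rewrite -ler_pdivlMl// mulrC.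
Qed.

Lemma lebesgue_measure_mulr (A : set R) : measurable A ->
  mu A = (c%:E * mu (( *%R c) @^-1` A))%E.
Proof.
have /(_ mdil) := @lebesgue_measure_unique R
  (mscale (NngNum (ltW c0)) (pushforward mu dil : {measure set _ -> \bar R})).
apply=> // _ [[a b]] _ <-.
rewrite [RHS]/(c%:E * mu (dil @^-1` `]a, b]))%E mulr_preimage_itvoc.
rewrite !lebesgue_measure_itv/= !lte_fin ltr_pM2r ?invr_gt0//.
case: ifPn => _ /=; last by rewrite mulr0.
by rewrite -EFinD; congr EFin; field; rewrite gt_eqF.
Qed.

Lemma ge0_integral_itvoy_mulr (f : R -> \bar R) :
  measurable_fun (`]0, +oo[ : set R) f -> (forall x, 0 < x -> (0 <= f x)%E) ->
  (\int[mu]_(x in `]0%R, +oo[) f x =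
   c%:E * \int[mu]_(x in `]0%R, +oo[) f (c * x)%R)%E.
Proof.
move=> mf f0.
have f0' : {in `]0%R, +oo[%classic, forall x : R, (0 <= f x)%E}.
  by move=> x; rewrite inE/= in_itv/= andbT; exact: f0.
have dil_itv : dil @^-1` `]0%R, +oo[ = `]0%R, +oo[%classic.
  by apply: eq_set => x; rewrite /= !in_itv/= !andbT pmulr_rgt0.
rewrite -[in RHS]dil_itv -(ge0_integral_pushforward mdil)//.
rewrite -(ge0_integral_mscale _ _ (NngNum (ltW c0)))//; last by move=> x /mem_set /f0'.
apply: eq_measure_integral => A mA _.
exact: lebesgue_measure_mulr.
Qed.

End dilation.

Section gamma_integral.
Context {R : realType}.
Local Notation mu := (@lebesgue_measure R).

Definition eGamma (z : R) : \bar R :=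
  \int[mu]_(y in `]0%R, +oo[) (y `^ (z - 1) * expR (- y))%:E.

Let gamma_kernel_ge0 (a y : R) : 0 <= y `^ a * expR (- y).
Proof. by rewrite mulr_ge0 ?powR_ge0 ?expR_ge0. Qed.

Lemma Gamma_fine (z : R) : Gamma z = fine (eGamma z).
Proof. by []. Qed.

Lemma measurable_powR_expR (a : R) (g : R -> R) (D : set R) :
  measurable_fun [set: R] g -> measurable_fun D (fun y => (y `^ a * expR (g y))%:E).
Proof.
move=> mg; apply/measurable_EFinP/measurable_funM.
  by apply: measurable_funTS; exact: measurable_powR.
by apply: measurable_funTS; apply: measurableT_comp.
Qed.

Let measurable_gamma_kernel (a : R) :
  measurable_fun (`]0, +oo[ : set R) (fun y => (y `^ a * expR (- y))%:E).
Proof. by apply: measurable_powR_expR; exact: oppr_measurable. Qed.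

Lemma eGamma_ge0 (z : R) : (0 <= eGamma z)%E.
Proof. by apply: integral_ge0 => y _; rewrite lee_fin gamma_kernel_ge0. Qed.

Lemma Gamma_ge0 (z : R) : 0 <= Gamma z.
Proof. exact/fine_ge0/eGamma_ge0. Qed.

Lemma eGamma_rate (c z : R) : 0 < c ->
  (\int[mu]_(y in `]0%R, +oo[) (y `^ (z - 1) * expR (- c * y))%:E =
   (c `^ (- z))%:E * eGamma z)%E.
Proof.
move=> c0; set I := (\int[mu]_(y in _) _)%E.
suff -> : eGamma z = ((c `^ z)%:E * I)%E.
  by rewrite muleA -EFinM powRN mulVf ?mul1e// gt_eqF// powR_gt0.
rewrite /eGamma (ge0_integral_itvoy_mulr _ c0); first last.
- by move=> y _; rewrite lee_fin gamma_kernel_ge0.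
- exact: measurable_gamma_kernel.
have -> : c `^ z = c * c `^ (z - 1).
  rewrite -{2}(powRr1 (ltW c0)) -powRD; first by rewrite addrC subrK.
  by rewrite (gt_eqF c0) implybT.
rewrite EFinM -muleA; congr (_ * _)%E.
rewrite -ge0_integralZl_EFin ?powR_ge0//; first last.
- by apply: measurable_powR_expR; exact: mulrl_measurable.
- by move=> y _; rewrite lee_fin mulr_ge0 ?powR_ge0 ?expR_ge0.
apply: eq_integral => y; rewrite inE/= in_itv/= andbT => y0.
by rewrite -EFinM powRM ?(ltW c0) ?(ltW y0)// mulrA mulNr.
Qed.

Lemma expR_eseries (z : R) : (\sum_(n <oo) (z ^+ n / n`!%:R)%:E = (expR z)%:E)%E.
Proof.
rewrite -EFin_lim; last exact: is_cvg_series_exp_coeff.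
by congr (limn _); apply/funext => n /=; rewrite sumEFin.
Qed.

Lemma eGamma_negbin_series (kappa r : R) : 0 <= r < 1 ->
  (\sum_(x <oo) eGamma (x%:R + kappa) * (r ^+ x / x`!%:R)%:E =
   ((1 - r) `^ (- kappa))%:E * eGamma kappa)%E.
Proof.
move=> /andP[r0 r1]; rewrite -eGamma_rate ?subr_gt0//.
have coef0 x y : 0 < y -> 0 <= (r * y) ^+ x / x`!%:R.
  by move=> y0; rewrite divr_ge0 ?exprn_ge0 ?mulr_ge0// ltW.
transitivity (\sum_(x <oo) \int[mu]_(y in `]0%R, +oo[)
    ((y `^ (kappa - 1) * expR (- y)) * ((r * y) ^+ x / x`!%:R))%:E)%E.
  apply: eq_eseriesr => x _; rewrite /eGamma -ge0_integralZr//; last 3 first.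
  - exact: measurable_gamma_kernel.
  - by move=> y _; rewrite lee_fin gamma_kernel_ge0.
  - by rewrite lee_fin divr_ge0 ?exprn_ge0.
  apply: eq_integral => y; rewrite inE/= in_itv/= andbT => y0.
  rewrite -EFinM; congr EFin.
  have -> : x%:R + kappa - 1 = (kappa - 1) + x%:R by ring.
  rewrite powRD ?(gt_eqF y0) ?implybT// powR_mulrn ?(ltW y0)// exprMn.
  by ring.
rewrite -integral_nneseries//; last 2 first.
- move=> x; apply/measurable_EFinP/measurable_funM.
    by apply/measurable_EFinP; exact: measurable_gamma_kernel.
  by apply/measurable_funM => //; apply/measurable_funX; exact: mulrl_measurable.
- move=> x y; rewrite /= in_itv/= andbT => y0.
  by rewrite lee_fin mulr_ge0 ?gamma_kernel_ge0 ?coef0.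
apply: eq_integral => y; rewrite inE/= in_itv/= andbT => y0.
under eq_eseriesr do rewrite EFinM.
rewrite nneseriesZl; last by move=> x _; rewrite lee_fin coef0.
rewrite expR_eseries -EFinM -mulrA -expRD; congr (_ * expR _)%:E; ring.
Qed.
End gamma_integral.

Section negbin.
Context {R : realType}.
Implicit Types (kappa p q t : R) (x : nat).

Lemma measurable_negbin_pmf kappa x (D : set R) :
  measurable_fun D (fun p => negbin_pmf kappa p x).
Proof.
apply: measurable_funM; last by apply/measurable_funX/measurable_funB.
apply: measurable_funM => //.
by apply: measurable_funTS; exact: measurable_powR.
Qed.

Lemma negbin_pmf_ge0 kappa p x : p <= 1 -> 0 <= negbin_pmf kappa p x.
Proof.
move=> p1; rewrite /negbin_pmf mulr_ge0 ?exprn_ge0 ?subr_ge0// mulr_ge0 ?powR_ge0//.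
by rewrite divr_ge0 ?mulr_ge0 ?Gamma_ge0.
Qed.

Lemma nneseries_chernoff (u : nat -> R) t (m : int) :
  (forall x, 0 <= u x) -> 0 <= t ->
  (\sum_(x <oo | (m <= x%:Z)%R) (u x)%:E <=
   (expR (- t * m%:~R))%:E * \sum_(x <oo) (u x * expR (t * x%:R))%:E)%E.
Proof.
move=> u0 t0; rewrite -nneseriesZl; last by move=> x _; rewrite lee_fin mulr_ge0 ?expR_ge0.
rewrite eseries_mkcond; apply: lee_nneseries => [x _ _|x _].
  by case: ifP => // _; rewrite lee_fin.
case: ifPn => [mx|_]; last by rewrite -EFinM lee_fin !mulr_ge0 ?expR_ge0.
rewrite -EFinM lee_fin mulrCA -expRD -[leLHS]mulr1 ler_wpM2l//.
rewrite -[leLHS]expR0 ler_expR addrC mulNr -mulrBr mulr_ge0// subr_ge0.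
by rewrite -[x%:R]/(x%:Z%:~R : R) ler_int.
Qed.

Lemma negbin_mgf_le kappa p t : p <= 1 -> (1 - p) * expR t < 1 ->
  (\sum_(x <oo) (negbin_pmf kappa p x * expR (t * x%:R))%:E <=
   (p `^ kappa * (1 - (1 - p) * expR t) `^ (- kappa))%:E)%E.
Proof.
move=> p1; set r := (1 - p) * expR t => r1.
have r0 : 0 <= r by rewrite mulr_ge0 ?expR_ge0 ?subr_ge0.
have rhs0 : 0 <= p `^ kappa * (1 - r) `^ (- kappa) by rewrite mulr_ge0 ?powR_ge0.
(* [Gamma] is [fine] of the Gamma integral, hence [0] when the integral diverges;
   the pmf then vanishes. *)
have [G0|GN0] := eqVneq (Gamma kappa) 0.
  rewrite eseries0 ?lee_fin// => x _ _.
  by rewrite /negbin_pmf G0 mulr0 invr0 mulr0 !mul0r.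
have eG : eGamma kappa = (Gamma kappa)%:E.
  rewrite Gamma_fine fineK//; apply: contraNT GN0 => /fin_numPn[] eGoo.
  - by have := eGamma_ge0 kappa; rewrite eGoo.
  - by rewrite Gamma_fine eGoo.
have G0 : 0 < Gamma kappa by rewrite lt_def GN0 Gamma_ge0.
pose C := p `^ kappa / Gamma kappa.
have C0 : 0 <= C by rewrite divr_ge0 ?powR_ge0 ?Gamma_ge0.
have coef0 x : 0 <= r ^+ x / x`!%:R by rewrite divr_ge0 ?exprn_ge0.
have termE x : negbin_pmf kappa p x * expR (t * x%:R) =
    C * (Gamma (x%:R + kappa) * (r ^+ x / x`!%:R)).
  rewrite /negbin_pmf /C /r exprMn -expRM_natl [t * _]mulrC; field.
  by rewrite (gt_eqF G0) pnatr_eq0 -lt0n fact_gt0.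
have fine_le (e : \bar R) : (0 <= e)%E -> ((fine e)%:E <= e)%E by case: e.
apply: (@le_trans _ _
    (C%:E * \sum_(x <oo) (eGamma (x%:R + kappa) * (r ^+ x / x`!%:R)%:E))%E).
  rewrite -nneseriesZl => [|x _]; last by rewrite mule_ge0 ?eGamma_ge0 ?lee_fin.
  apply: lee_nneseries => [x _ _|x _].
    by rewrite lee_fin mulr_ge0 ?negbin_pmf_ge0 ?expR_ge0.
  rewrite termE !EFinM; apply: lee_wpmul2l; first by rewrite lee_fin.
  by apply: lee_wpmul2r; [rewrite lee_fin coef0 | exact/fine_le/eGamma_ge0].
rewrite eGamma_negbin_series ?r0// eG -!EFinM lee_fin /C.
by rewrite le_eqVlt; apply/orP; left; apply/eqP; field; rewrite gt_eqF.
Qed.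

Lemma powR_negbin_mgf_le kappa q p : 0 <= kappa -> 0 < q < 1 -> 1 - q ^+ 2 <= p ->
  p `^ kappa * (1 - (1 - p) / q) `^ (- kappa) <= (1 + q) `^ kappa.
Proof.
move=> k0 /andP[q0 q1] hp; set y := 1 - (1 - p) / q.
have y0 : 0 < y by rewrite subr_gt0 ltr_pdivrMr// mul1r; nra.
have py : p <= (1 + q) * y.
  rewrite -subr_ge0 (_ : _ - p = (p - (1 - q ^+ 2)) / q).
    by rewrite divr_ge0 ?subr_ge0// ltW.
  by rewrite /y; field; rewrite gt_eqF.
apply: (@le_trans _ _ (((1 + q) * y) `^ kappa * y `^ (- kappa))).
  by rewrite ler_wpM2r ?powR_ge0// ge0_ler_powR// nnegrE; nra.
rewrite powRM ?(ltW y0) ?addr_ge0 ?(ltW q0)// -mulrA powRN mulfV ?mulr1//.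
by rewrite gt_eqF// powR_gt0.
Qed.

Lemma negbin_tail_le kappa q p (m : int) :
  0 <= kappa -> 0 < q < 1 -> 1 - q ^+ 2 <= p <= 1 ->
  (\sum_(x <oo | (m <= x%:Z)%R) (negbin_pmf kappa p x)%:E <=
   (expR (ln q * m%:~R) * (1 + q) `^ kappa)%:E)%E.
Proof.
move=> k0 /andP[q0 q1] /andP[hp p1].
have tilt : (1 - p) * expR (- ln q) = (1 - p) / q by rewrite expRN lnK.
apply: (le_trans (nneseries_chernoff _ (- ln q) m _ _)).
- by move=> x; exact: negbin_pmf_ge0.
- by rewrite oppr_ge0 ltW// ln_lt0// q0.
rewrite opprK EFinM; apply: lee_wpmul2l; first by rewrite lee_fin expR_ge0.
apply: (le_trans (negbin_mgf_le kappa p (- ln q) p1 _)).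
  by rewrite tilt ltr_pdivrMr// mul1r; nra.
by rewrite tilt lee_fin powR_negbin_mgf_le// q0.
Qed.

End negbin.

Section mixture.
Context {d} {T : measurableType d} {R : realType} (P : probability T R).
Local Open Scope ereal_scope.

Lemma integral_full_probability (D : set T) (f : T -> \bar R) :
  measurable D -> P D = 1 -> measurable_fun [set: T] f ->
  \int[P]_x f x = \int[P]_(x in D) f x.
Proof.
move=> mD PD mf; rewrite [RHS]integral_mkcond.
apply: ae_eq_integral => //; first exact/(measurable_restrictT _ mD)/measurable_funTS.
exists (~` D); split; first exact: measurableC.
  by have := probability_setC P mD; rewrite PD subee.
move=> x /= /not_implyP[_ fxD] Dx; apply: fxD.
by rewrite patchE mem_set.
Qed.

Lemma nneseries_integral_le (D : set T) (u : nat -> T -> R) (S : pred nat) (B : R) :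
  measurable D -> P D = 1 -> (forall x, measurable_fun [set: T] (u x)) ->
  (forall x p, D p -> (0 <= u x p)%R) ->
  (forall p, D p -> \sum_(x <oo | S x) (u x p)%:E <= B%:E) ->
  \sum_(x <oo | S x) \int[P]_p (u x p)%:E <= B%:E.
Proof.
move=> mD PD mu u0 uB.
have muE x : measurable_fun [set: T] (fun p => (u x p)%:E) by exact/measurable_EFinP.
rewrite (eq_eseriesr (g := fun x => \int[P]_(p in D) (u x p)%:E)); last first.
  by move=> x _; exact: integral_full_probability.
rewrite eseries_mkcond (eq_eseriesr (g := fun x =>
    \int[P]_(p in D) (if S x then (u x p)%:E else 0))); last first.
  by move=> x _; case: ifP => _ //; rewrite integral0.
rewrite -integral_nneseries//; last 2 first.
- by move=> x; case: (S x) => //; exact: measurable_funTS.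
- by move=> x p Dp; case: ifP => _ //; rewrite lee_fin u0.
under eq_integral do rewrite -eseries_mkcond.
apply: (le_trans (@ge0_le_integral _ _ _ P _ mD _ (cst B%:E) _ _ _ _)).
- by move=> p Dp; apply: nneseries_ge0 => x _ _; rewrite lee_fin u0.
- apply: ge0_emeasurable_sum => [x p Dp _|x _]; first by rewrite lee_fin u0.
  exact: measurable_funTS.
- exact: measurable_cst.
- exact: uB.
by rewrite integral_cst// -[leRHS]mule1 -PD.
Qed.

End mixture.

Theorem lemmaD1 (R : realType) (kappa h : R) (G : probability R R) (n : nat) (a : R) :
  0 < kappa -> 0 < h < 1 ->
  G `[h, 1%R[%classic = 1%E ->
  (0 < n)%N -> 1 < a ->
  let t := - ln (1 - h) / 2 in
  let A_h := (h / (1 - Num.sqrt (1 - h))) `^ kappa in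
  let K := Num.ceil ((a * ln n%:R + ln A_h) / t) in
  forall s : nat,
    (tailG G kappa (K + s%:Z) <= (expR (- t * s%:R) / n%:R `^ a)%:E)%E.
Proof.
move=> k0 /andP[h0 h1] GD n0 _ t A_h K s.
set q := Num.sqrt (1 - h).
have q0 : 0 < q by rewrite sqrtr_gt0 subr_gt0.
have hE : h = 1 - q ^+ 2 by rewrite sqr_sqrtr ?subr_ge0 ?ltW// opprB addrC subrK.
have q1 : q < 1 by nra.
have lnq : ln q = - t.
  by rewrite /q -powR12_sqrt ?subr_ge0 ?ltW// ln_powR /t mulNr opprK mulrC.
have t0 : 0 < t by rewrite -oppr_lt0 -lnq ln_lt0// q0.
have Ah : A_h = (1 + q) `^ kappa.
  rewrite /A_h -/q; congr (_ `^ _); rewrite [in LHS]hE.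
  by field; rewrite subr_eq0 eq_sym lt_eqF.
set m := (K + s%:Z)%R.
apply: (le_trans (nneseries_integral_le G _ _ _ (expR (- t * m%:~R) * A_h) _ GD _ _ _)).
- exact: measurable_itv.
- by move=> x; exact: measurable_negbin_pmf.
- by move=> x p; rewrite /= in_itv/= => /andP[_ /ltW p1]; exact: negbin_pmf_ge0.
- move=> p; rewrite /= in_itv/= hE => /andP[hp /ltW p1].
  by rewrite -lnq Ah negbin_tail_le ?(ltW k0) ?q0 ?q1 ?hp.
have tK : a * ln n%:R + ln A_h <= t * K%:~R.
  by rewrite [t * _]mulrC -ler_pdivrMr// ceil_ge.
have nE : n%:R `^ a = expR (a * ln n%:R) by rewrite /powR gt_eqF ?ltr0n.
have AhE : A_h = expR (ln A_h) by rewrite lnK// posrE Ah powR_gt0// addr_gt0.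
rewrite lee_fin nE AhE /m intrD mulrDr -!expRD -expRN -expRD ler_expR.
lra.
Qed.
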